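(* Let $(a_n)_{n\ge1}$ be an increasing sequence of positive integers and $x\in\mathbb{R}^d$. Then for every nonempty dyadic cube $\lambda\subseteq[0,1)^d$, $\liminf_{j\to\infty}2^{-dj}\#\mathrm{M}((\{a_nx\})_{n\ge1};\lambda,j)\ge\dfrac{\kappa_*(x)^d\,\underline{\delta}((a_n))}{2^d\mathcal{L}^d(\lambda)}\,\underline{\rho}((a_nx)_{n\ge1};\lambda)$.
   Context: $\mathcal{L}^d$ is Lebesgue measure; $\{z\}$ is the coordinatewise fractional part. For $z\in\mathbb{R}^d$, $\|z\|=\inf_{p\in\mathbb{Z}^d}|z-p|_\infty$, and $\kappa_*(x)=\inf_{q\in\mathbb{N}}q^{1/d}\|qx\|$. $\underline{\delta}((a_n))=\liminf_{N\to\infty}\frac1N\#\{n\ge1:a_n\le N\}$. For a sequence $(y_n)$ in $\mathbb{R}^d$ and a nonempty dyadic cube $\lambda\subseteq[0,1)^d$, $\underline{\rho}((y_n)_{n\ge1};\lambda)=\liminf_{N\to\infty}\frac1N\#\{n\in\{1,\dots,N\}:\{y_n\}\in\lambda\}$. A dyadic cube is $\lambda=2^{-j}(k+[0,1)^d)$, $j\in\mathbb{Z}$, $k\in\mathbb{Z}^d$, with generation $\langle\lambda\rangle=j$; $\mathrm{M}((x_n)_{n\ge1};\lambda,j)$ is the set of dyadic cubes $\lambda'\subseteq\lambda$ of generation $\langle\lambda\rangle+j$ such that $x_n\in\lambda'$ for some $n\le2^{d\langle\lambda'\rangle}$. *)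

From Stdlib Require Import Reals Lra Lia ZArith Arith List ClassicalEpsilon.
Open Scope R_scope.

(* [the P] is "the" real satisfying P (chosen by Hilbert's epsilon);
   used only for properties with a unique witness (inf, sup, liminf, card). *)
Definition the {A : Type} (i : inhabited A) (P : A -> Prop) : A := epsilon i P.

Definition is_lower_bound (E : R -> Prop) (m : R) : Prop := forall y, E y -> m <= y.
Definition is_glb (E : R -> Prop) (m : R) : Prop :=
  is_lower_bound E m /\ (forall b, is_lower_bound E b -> b <= m).

Definition Inf (E : R -> Prop) : R := the (inhabits 0) (is_glb E).
Definition Sup (E : R -> Prop) : R := the (inhabits 0) (is_lub E).

(* liminf_{n -> oo} u n  :=  sup_{N >= 1} inf_{n >= N} u n
   (sequences are indexed from 1, as in the paper) *)
Definition liminf (u : nat -> R) : R :=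
  Sup (fun y => exists N : nat, (1 <= N)%nat /\
         y = Inf (fun z => exists n : nat, (N <= n)%nat /\ z = u n)).

Definition has_card {T : Type} (P : T -> Prop) (m : nat) : Prop :=
  exists l : list T, NoDup l /\ (forall t, In t l <-> P t) /\ length l = m.
Definition card {T : Type} (P : T -> Prop) : nat := the (inhabits 0%nat) (has_card P).

(* ---------- vectors of R^d : functions nat -> R, coordinates 0..d-1 ---------- *)
Definition vec := nat -> R.

Definition frac_vec (z : vec) : vec := fun i => frac_part (z i).

Definition scal (c : R) (z : vec) : vec := fun i => c * z i.

Fixpoint supnorm (d : nat) (v : vec) : R :=
  match d with
  | O => 0
  | S d' => Rmax (supnorm d' v) (Rabs (v d'))
  end.

Definition distZ (d : nat) (z : vec) : R :=
  Inf (fun t => exists p : nat -> Z, t = supnorm d (fun i => z i - IZR (p i))).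

Definition kappa_star (d : nat) (x : vec) : R :=
  Inf (fun t => exists q : nat, (1 <= q)%nat /\
         t = Rpower (INR q) (1 / INR d) * distZ d (scal (INR q) x)).

Definition lower_density (a : nat -> nat) : R :=
  liminf (fun N => INR (card (fun n : nat => (1 <= n)%nat /\ (a n <= N)%nat)) / INR N).

(* The dyadic cube 2^{-j}(k + [0,1)^d), j in Z, k in Z^d (k a list of length d);
   its generation is j. *)
Definition in_cube (d : nat) (j : Z) (k : list Z) (y : vec) : Prop :=
  forall i, (i < d)%nat ->
    powerRZ 2 (- j) * IZR (nth i k 0%Z) <= y i /\
    y i < powerRZ 2 (- j) * (IZR (nth i k 0%Z) + 1).

Definition in_unit_cube (d : nat) (y : vec) : Prop :=
  forall i, (i < d)%nat -> 0 <= y i /\ y i < 1.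

Definition cube_measure (d : nat) (j : Z) : R := powerRZ 2 (- (Z.of_nat d * j)).

Definition lower_freq (d : nat) (y : nat -> vec) (j : Z) (k : list Z) : R :=
  liminf (fun N => INR (card (fun n : nat => (1 <= n <= N)%nat /\ in_cube d j k (frac_vec (y n))))
                   / INR N).

Definition Mset (d : nat) (xs : nat -> vec) (j : Z) (k : list Z) (J : nat) (k' : list Z) : Prop :=
  length k' = d /\
  (forall y, in_cube d (j + Z.of_nat J) k' y -> in_cube d j k y) /\
  exists n : nat, (1 <= n)%nat /\
    INR n <= powerRZ 2 (Z.of_nat d * (j + Z.of_nat J)) /\
    in_cube d (j + Z.of_nat J) k' (xs n).

From Stdlib Require Import Reals ZArith Arith List.
From Stdlib Require Import Lra Lia Classical ClassicalEpsilon.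
Open Scope R_scope.

(* Fix the generation [j + J] and put [N = 2^(d(j+J))], [m = floor (kappa_*(x)^d N)].
   If two indices [n < n' <= N] send [{a_n x}] and [{a_n' x}] into the same dyadic cube
   of generation [j + J], then [q = a_n' - a_n] satisfies [||q x|| < 2^-(j+J)], so the
   definition of [kappa_*] forces [kappa_*(x)^d N < q], i.e. [q > m].  Hence each such
   cube is hit by at most [a_N / m + 1] of the indices [n <= N] with [{a_n x}] in lambda.
   The lower frequency provides about [rho N] such indices and the lower density gives
   [a_N <~ N / delta], so [#M >~ kappa_*(x)^d delta rho N / 2]; dividing by
   [2^(dJ) = N L^d(lambda)] gives the bound. *)

Lemma the_spec {A} (i : inhabited A) (P : A -> Prop) : (exists x, P x) -> P (the i P).
Proof. intro H. unfold the. apply epsilon_spec. exact H. Qed.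

Lemma is_glb_exists (E : R -> Prop) :
  (exists y, E y) -> (exists m, is_lower_bound E m) -> exists m, is_glb E m.
Proof.
  intros [y Ey] [m Hm].
  set (E' := fun z => E (- z)).
  assert (Hb : bound E').
  { exists (- m). intros z Hz. apply Hm in Hz. lra. }
  destruct (completeness E' Hb) as [s [Hs1 Hs2]].
  { exists (- y). unfold E'. rewrite Ropp_involutive. exact Ey. }
  exists (- s). split.
  - intros z Hz. assert (Hz' : E' (- z)) by (unfold E'; rewrite Ropp_involutive; exact Hz).
    apply Hs1 in Hz'. lra.
  - intros b Hb'. enough (s <= - b) by lra.
    apply Hs2. intros z Hz. apply Hb' in Hz. lra.
Qed.

Lemma Inf_is_glb (E : R -> Prop) :
  (exists y, E y) -> (exists m, is_lower_bound E m) -> is_glb E (Inf E).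
Proof. intros H1 H2. unfold Inf. apply the_spec, is_glb_exists; auto. Qed.

Lemma Sup_is_lub (E : R -> Prop) : (exists y, E y) -> bound E -> is_lub E (Sup E).
Proof.
  intros H1 H2. unfold Sup. apply the_spec.
  destruct (completeness E H2 H1) as [s Hs]. eauto.
Qed.

Section Liminf.
Variables (u : nat -> R) (lo hi : R).
Hypothesis u_bounded : forall n, lo <= u n <= hi.

Let tail (N : nat) := fun z => exists n : nat, (N <= n)%nat /\ z = u n.
Let tail_infs := fun y => exists N : nat, (1 <= N)%nat /\ y = Inf (tail N).

Lemma Inf_tail_is_glb N : is_glb (tail N) (Inf (tail N)).
Proof.
  apply Inf_is_glb; [exists (u N), N; auto|].
  exists lo. intros z [n [_ ->]]. apply u_bounded.
Qed.

Lemma Inf_tail_le N n : (N <= n)%nat -> Inf (tail N) <= u n.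
Proof. intros Hn. apply (Inf_tail_is_glb N). exists n. auto. Qed.

Lemma liminf_is_lub : is_lub tail_infs (liminf u).
Proof.
  apply Sup_is_lub; [exists (Inf (tail 1)), 1%nat; auto|].
  exists hi. intros y [N [_ ->]].
  pose proof (Inf_tail_le N N (le_n N)). specialize (u_bounded N). lra.
Qed.

Lemma liminf_eventually_gt eps :
  0 < eps -> exists N, forall n, (N <= n)%nat -> u n > liminf u - eps.
Proof.
  intros He. destruct liminf_is_lub as [_ Hleast].
  apply NNPP. intro Hn.
  enough (liminf u <= liminf u - eps) by lra.
  apply Hleast. intros y [N [_ ->]].
  apply Rnot_lt_le. intro Hlt. apply Hn. exists N. intros n Hn'.
  pose proof (Inf_tail_le N n Hn'). lra.
Qed.

Lemma liminf_ge_of_eventually c :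
  (forall eps, 0 < eps -> exists N, forall n, (N <= n)%nat -> u n >= c - eps) ->
  liminf u >= c.
Proof.
  intros H. destruct liminf_is_lub as [Hub _].
  apply Rnot_lt_ge. intro Hlt.
  destruct (H ((c - liminf u) / 2)) as [N HN]; [lra|].
  set (N' := max N 1).
  assert (Inf (tail N') <= liminf u) by (apply Hub; exists N'; split; [lia|auto]).
  enough (c - (c - liminf u) / 2 <= Inf (tail N')) by lra.
  apply (Inf_tail_is_glb N'). intros z [n [Hn ->]]. apply Rge_le, HN. lia.
Qed.

Lemma liminf_le_of_le B : (forall n, u n <= B) -> liminf u <= B.
Proof.
  intros H. destruct liminf_is_lub as [_ Hleast]. apply Hleast. intros y [N [_ ->]].
  pose proof (Inf_tail_le N N (le_n N)). specialize (H N). lra.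
Qed.

End Liminf.

Lemma liminf_ge_mul_subseq (u r : nat -> R) (phi : nat -> nat) (c : R) :
  (exists lo hi, forall n, lo <= u n <= hi) -> (exists lo hi, forall n, lo <= r n <= hi) ->
  (forall n, (n <= phi n)%nat) -> 0 <= c ->
  (exists J0, forall J, (J0 <= J)%nat -> c * r (phi J) <= u J) ->
  liminf u >= c * liminf r.
Proof.
  intros [ulo [uhi Hu]] [rlo [rhi Hr]] Hphi Hc [J0 HJ0].
  apply (liminf_ge_of_eventually u ulo uhi Hu). intros eps Heps.
  set (e := eps / (c + 1)).
  assert (Hce : c * e <= eps).
  { unfold e. apply (Rmult_le_reg_r (c + 1)); [lra|].
    unfold Rdiv. rewrite Rmult_assoc, (Rmult_assoc eps), Rinv_l by lra. nra. }
  destruct (liminf_eventually_gt r rlo rhi Hr e) as [Nr HNr]; [unfold e; apply Rdiv_lt_0_compat; lra|].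
  exists (J0 + Nr)%nat. intros J HJ.
  assert (r (phi J) > liminf r - e) by (apply HNr; specialize (Hphi J); lia).
  assert (c * r (phi J) <= u J) by (apply HJ0; lia).
  nra.
Qed.

Lemma exists_NoDup_filter {T} (l : list T) (P : T -> Prop) :
  exists l', NoDup l' /\ (forall t, In t l' <-> In t l /\ P t) /\ (length l' <= length l)%nat.
Proof.
  induction l as [|a l IH].
  - exists nil. split; [constructor|split; [intros t; simpl; tauto|simpl; lia]].
  - destruct IH as [l' [H1 [H2 H3]]].
    destruct (classic (P a /\ ~ In a l')) as [Hc|Hc].
    + exists (a :: l'). split; [|split; [intros t; split|]].
      * constructor; tauto.
      * intros [<-|Ht]; simpl; [tauto|]. apply H2 in Ht. tauto.
      * intros [[<-|Ht] HP]; simpl; [tauto|]. right. apply H2. tauto.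
      * simpl. lia.
    + exists l'. split; [auto|split; [intros t; split|]].
      * intros Ht. apply H2 in Ht. simpl. tauto.
      * intros [[<-|Ht] HP]; [apply NNPP; intro; apply Hc; tauto|].
        apply H2. tauto.
      * simpl. lia.
Qed.

Lemma has_card_unique {T} (P : T -> Prop) m1 m2 : has_card P m1 -> has_card P m2 -> m1 = m2.
Proof.
  intros [l1 [N1 [I1 <-]]] [l2 [N2 [I2 <-]]].
  apply Nat.le_antisymm; apply NoDup_incl_length; auto; intros t Ht.
  - apply I2, I1, Ht.
  - apply I1, I2, Ht.
Qed.

Lemma card_of_finite {T} (P : T -> Prop) (l : list T) : (forall t, P t -> In t l) ->
  exists l', NoDup l' /\ (forall t, In t l' <-> P t) /\ card P = length l' /\
             (length l' <= length l)%nat.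
Proof.
  intros Hl. destruct (exists_NoDup_filter l P) as [l' [H1 [H2 H3]]].
  assert (Hl' : forall t, In t l' <-> P t) by (intro t; rewrite H2; split; [tauto|auto]).
  exists l'. repeat split; auto; try apply Hl'.
  apply (has_card_unique P); [unfold card; apply the_spec; exists (length l')|]; exists l'; auto.
Qed.

Lemma card_le_of_bounded (P : nat -> Prop) N :
  (forall n, P n -> (1 <= n <= N)%nat) -> (card P <= N)%nat.
Proof.
  intros H. destruct (card_of_finite P (seq 1 N)) as [l' [_ [_ [-> Hl]]]].
  - intros t Ht. apply in_seq. apply H in Ht. lia.
  - rewrite length_seq in Hl. exact Hl.
Qed.

Lemma card_ratio_bounds (c N : nat) : (c <= N)%nat -> 0 <= INR c / INR N <= 1.
Proof.
  intros H. destruct N as [|N].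
  - replace c with 0%nat by lia. simpl. unfold Rdiv. rewrite Rmult_0_l. lra.
  - assert (0 < INR (S N)) by (apply lt_0_INR; lia). apply le_INR in H.
    pose proof (pos_INR c). split.
    + apply Rmult_le_pos; [lra|]. left. apply Rinv_0_lt_compat. lra.
    + apply (Rmult_le_reg_r (INR (S N))); auto. unfold Rdiv. rewrite Rmult_assoc, Rinv_l; lra.
Qed.

Lemma supnorm_nonneg d v : 0 <= supnorm d v.
Proof. induction d; simpl; [lra|]. eapply Rle_trans; [exact IHd|apply Rmax_l]. Qed.

Lemma supnorm_lt d v b : 0 < b -> (forall i, (i < d)%nat -> Rabs (v i) < b) -> supnorm d v < b.
Proof.
  intros Hb H. induction d; simpl; [lra|].
  apply Rmax_lub_lt; [apply IHd; intros; apply H|apply H]; lia.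
Qed.

Lemma supnorm_le d v b : 0 <= b -> (forall i, (i < d)%nat -> Rabs (v i) <= b) -> supnorm d v <= b.
Proof.
  intros Hb H. induction d; simpl; [lra|].
  apply Rmax_lub; [apply IHd; intros; apply H|apply H]; lia.
Qed.

Lemma distZ_is_glb d z :
  is_glb (fun t => exists p : nat -> Z, t = supnorm d (fun i => z i - IZR (p i))) (distZ d z).
Proof.
  apply Inf_is_glb; [eexists; exists (fun _ => 0%Z); reflexivity|].
  exists 0. intros t [p ->]. apply supnorm_nonneg.
Qed.

Lemma distZ_nonneg d z : 0 <= distZ d z.
Proof. apply (distZ_is_glb d z). intros t [p ->]. apply supnorm_nonneg. Qed.

Lemma distZ_le_supnorm d z p : distZ d z <= supnorm d (fun i => z i - IZR (p i)).
Proof. apply (distZ_is_glb d z). eauto. Qed.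

Lemma Rpower_mul_distZ_nonneg d x q :
  0 <= Rpower (INR q) (1 / INR d) * distZ d (scal (INR q) x).
Proof. apply Rmult_le_pos; [left; apply exp_pos|apply distZ_nonneg]. Qed.

Lemma kappa_star_is_glb d x :
  is_glb (fun t => exists q : nat, (1 <= q)%nat /\
            t = Rpower (INR q) (1 / INR d) * distZ d (scal (INR q) x)) (kappa_star d x).
Proof.
  apply Inf_is_glb; [eexists; exists 1%nat; split; [lia|reflexivity]|].
  exists 0. intros t [q [_ ->]]. apply Rpower_mul_distZ_nonneg.
Qed.

Lemma kappa_star_nonneg d x : 0 <= kappa_star d x.
Proof. apply (kappa_star_is_glb d x). intros t [q [_ ->]]. apply Rpower_mul_distZ_nonneg. Qed.

Lemma kappa_star_le d x q : (1 <= q)%nat ->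
  kappa_star d x <= Rpower (INR q) (1 / INR d) * distZ d (scal (INR q) x).
Proof. intros Hq. apply (kappa_star_is_glb d x). eauto. Qed.

Lemma exists_near_int r : exists p : Z, Rabs (r - IZR p) <= 1 / 2.
Proof.
  destruct (base_Int_part r) as [H1 H2].
  destruct (Rle_dec (r - IZR (Int_part r)) (1 / 2)).
  - exists (Int_part r). rewrite Rabs_right; lra.
  - exists (Int_part r + 1)%Z. rewrite plus_IZR, Rabs_left1; lra.
Qed.

Lemma kappa_star_le_half d x : kappa_star d x <= 1 / 2.
Proof.
  eapply Rle_trans; [apply (kappa_star_le d x 1); lia|].
  replace (Rpower (INR 1) (1 / INR d)) with 1
    by (simpl; unfold Rpower; rewrite ln_1, Rmult_0_r, exp_0; reflexivity).
  rewrite Rmult_1_l.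
  destruct (choice (fun i p => Rabs (scal (INR 1) x i - IZR p) <= 1 / 2)) as [p Hp].
  { intro i. apply exists_near_int. }
  eapply Rle_trans; [apply (distZ_le_supnorm d _ p)|]. apply supnorm_le; [lra|]. intros; apply Hp.
Qed.

Lemma kappa_star_pow_le_half d x : (1 <= d)%nat -> kappa_star d x ^ d <= 1 / 2.
Proof.
  intros Hd. pose proof (kappa_star_nonneg d x). pose proof (kappa_star_le_half d x).
  set (kap := kappa_star d x) in *.
  replace d with (S (d - 1)) by lia. simpl.
  assert (kap ^ (d - 1) <= 1) by (rewrite <- (pow1 (d - 1)); apply pow_incr; lra).
  assert (0 <= kap ^ (d - 1)) by (apply pow_le; lra). nra.
Qed.

Lemma pow_lt_pow_base x y n : 0 <= x -> x < y -> (1 <= n)%nat -> x ^ n < y ^ n.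
Proof.
  intros H0 H1 Hn. induction n as [|[|n] IH]; [lia|simpl; lra|].
  assert (x ^ S n < y ^ S n) by (apply IH; lia).
  assert (0 <= x ^ S n) by (apply pow_le; lra).
  change (x * x ^ S n < y * y ^ S n). nra.
Qed.

Lemma kappa_star_pow_lt d x q G : (1 <= d)%nat -> (1 <= q)%nat ->
  distZ d (scal (INR q) x) < / 2 ^ G -> kappa_star d x ^ d * 2 ^ (d * G) < INR q.
Proof.
  intros Hd Hq Hdist.
  assert (HqR : 0 < INR q) by (apply lt_0_INR; lia).
  set (A := Rpower (INR q) (1 / INR d)).
  assert (HA : 0 < A) by apply exp_pos.
  assert (HAd : A ^ d = INR q).
  { unfold A. rewrite <- Rpower_pow, Rpower_mult by apply exp_pos.
    replace (1 / INR d * INR d) with 1 by (field; apply not_0_INR; lia).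
    apply Rpower_1; auto. }
  assert (Hkap : kappa_star d x < A * / 2 ^ G).
  { eapply Rle_lt_trans; [apply kappa_star_le; exact Hq|].
    apply Rmult_lt_compat_l; auto. }
  apply (pow_lt_pow_base _ _ d (kappa_star_nonneg d x)) in Hkap; auto.
  rewrite Rpow_mult_distr, HAd, pow_inv, <- pow_mult in Hkap.
  assert (HG : 0 < 2 ^ (G * d)) by (apply pow_lt; lra).
  replace (d * G)%nat with (G * d)%nat by lia.
  apply (Rmult_lt_compat_r (2 ^ (G * d))) in Hkap; auto.
  rewrite Rmult_assoc, Rinv_l in Hkap; lra.
Qed.

Lemma powerRZ_2_of_nat n : powerRZ 2 (Z.of_nat n) = 2 ^ n.
Proof. rewrite pow_powerRZ. reflexivity. Qed.

Lemma powerRZ_2_opp_of_nat n : powerRZ 2 (- Z.of_nat n) = / 2 ^ n.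
Proof. rewrite powerRZ_neg', powerRZ_2_of_nat. reflexivity. Qed.

Lemma INR_pow2 n : INR (2 ^ n) = 2 ^ n.
Proof. rewrite pow_INR. reflexivity. Qed.

Lemma lt_pow2_mul d j0 J : (1 <= d)%nat -> (J < 2 ^ (d * (j0 + J)))%nat.
Proof.
  intros Hd. apply (Nat.lt_le_trans _ (2 ^ J)); [apply Nat.pow_gt_lin_r; lia|].
  apply Nat.pow_le_mono_r; nia.
Qed.

Lemma in_unit_cube_generation_nonneg d j k : (1 <= d)%nat ->
  (forall y, in_cube d j k y -> in_unit_cube d y) -> (0 <= j)%Z.
Proof.
  intros Hd H. destruct (Z_lt_le_dec j 0) as [Hj|]; [exfalso|auto].
  set (t := powerRZ 2 (- j)).
  assert (Ht : 2 <= t).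
  { unfold t. replace (- j)%Z with (Z.of_nat (S (Z.to_nat (- j - 1)))) by lia.
    rewrite powerRZ_2_of_nat. simpl. pose proof (pow_R1_Rle 2 (Z.to_nat (- j - 1))). lra. }
  assert (H1 : in_unit_cube d (fun i => t * IZR (nth i k 0%Z))).
  { apply H. intros i Hi. cbv beta. fold t. split; nra. }
  assert (H2 : in_unit_cube d (fun i => t * (IZR (nth i k 0%Z) + 1 / 2))).
  { apply H. intros i Hi. cbv beta. fold t. split; nra. }
  specialize (H1 0%nat ltac:(lia)). specialize (H2 0%nat ltac:(lia)). simpl in *. nra.
Qed.

Fixpoint grid_points (d B : nat) : list (list Z) :=
  match d with
  | O => nil :: nil
  | S d' => flat_map (fun i => map (cons (Z.of_nat i)) (grid_points d' B)) (seq 0 B)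
  end.

Lemma length_grid_points d B : length (grid_points d B) = (B ^ d)%nat.
Proof.
  induction d as [|d IH]; [reflexivity|]. cbn [grid_points].
  transitivity (length (seq 0 B) * length (grid_points d B))%nat;
    [|rewrite length_seq, IH; reflexivity].
  induction (seq 0 B) as [|i s IHs]; [reflexivity|]. cbn [flat_map].
  rewrite length_app, length_map, IHs. reflexivity.
Qed.

Lemma in_grid_points d B k : length k = d ->
  (forall i, (i < d)%nat -> (0 <= nth i k 0 < Z.of_nat B)%Z) -> In k (grid_points d B).
Proof.
  revert k. induction d as [|d IH]; intros k Hl H.
  - destruct k; simpl in *; [auto|discriminate].
  - destruct k as [|z k]; simpl in Hl; [discriminate|]. simpl.
    apply in_flat_map. exists (Z.to_nat z).
    pose proof (H 0%nat ltac:(lia)) as H0. simpl in H0. split.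
    + apply in_seq. lia.
    + apply in_map_iff. exists k. split; [f_equal; lia|].
      apply IH; [lia|]. intros i Hi. apply (H (S i)). lia.
Qed.

Lemma Int_part_ge (z : Z) r : IZR z <= r -> (z <= Int_part r)%Z.
Proof.
  intros H. destruct (base_Int_part r) as [H1 H2].
  assert (IZR z < IZR (Int_part r + 1)) by (rewrite plus_IZR; lra).
  apply lt_IZR in H0. lia.
Qed.

Lemma Int_part_lt (z : Z) r : r < IZR z -> (Int_part r < z)%Z.
Proof. intros H. destruct (base_Int_part r). apply lt_IZR. lra. Qed.

Lemma Rabs_lt_of_Int_part_eq P u v : 0 < P -> Int_part (P * u) = Int_part (P * v) ->
  Rabs (v - u) < / P.
Proof.
  intros HP E. destruct (base_Int_part (P * u)) as [A1 A2].
  destruct (base_Int_part (P * v)) as [B1 B2]. rewrite E in A1, A2.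
  assert (Habs : Rabs (P * (v - u)) < 1) by (apply Rabs_def1; lra).
  rewrite Rabs_mult, (Rabs_right P) in Habs by lra.
  apply (Rmult_lt_reg_l P); [lra|]. rewrite Rinv_r; lra.
Qed.

Definition dyadic_index (d G : nat) (y : vec) : list Z :=
  map (fun i => Int_part (2 ^ G * y i)) (seq 0 d).

Lemma length_dyadic_index d G y : length (dyadic_index d G y) = d.
Proof. unfold dyadic_index. rewrite length_map, length_seq. reflexivity. Qed.

Lemma nth_dyadic_index d G y i : (i < d)%nat ->
  nth i (dyadic_index d G y) 0%Z = Int_part (2 ^ G * y i).
Proof.
  intros Hi. unfold dyadic_index.
  set (g := fun i => Int_part (2 ^ G * y i)).
  rewrite (nth_indep _ _ (g 0%nat)) by (rewrite length_map, length_seq; auto).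
  rewrite map_nth, seq_nth; auto.
Qed.

Lemma in_cube_dyadic_index d G y : in_cube d (Z.of_nat G) (dyadic_index d G y) y.
Proof.
  intros i Hi. rewrite nth_dyadic_index, powerRZ_2_opp_of_nat by auto.
  destruct (base_Int_part (2 ^ G * y i)) as [B1 B2].
  assert (HG : 0 < 2 ^ G) by (apply pow_lt; lra).
  split.
  - apply (Rmult_le_reg_l (2 ^ G)); auto. rewrite <- Rmult_assoc, Rinv_r; lra.
  - apply (Rmult_lt_reg_l (2 ^ G)); auto. rewrite <- Rmult_assoc, Rinv_r; lra.
Qed.

Lemma distZ_lt_of_dyadic_index_eq d G x (q1 q2 : nat) : (q1 <= q2)%nat ->
  dyadic_index d G (frac_vec (scal (INR q1) x)) = dyadic_index d G (frac_vec (scal (INR q2) x)) ->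
  distZ d (scal (INR (q2 - q1)) x) < / 2 ^ G.
Proof.
  intros Hq E.
  set (p := fun i => (Int_part (INR q2 * x i) - Int_part (INR q1 * x i))%Z).
  eapply Rle_lt_trans; [apply (distZ_le_supnorm d _ p)|].
  apply supnorm_lt; [apply Rinv_0_lt_compat, pow_lt; lra|]. intros i Hi.
  assert (Ei : Int_part (2 ^ G * frac_vec (scal (INR q1) x) i)
             = Int_part (2 ^ G * frac_vec (scal (INR q2) x) i)).
  { rewrite <- !(nth_dyadic_index d G) by auto. rewrite E. reflexivity. }
  apply Rabs_lt_of_Int_part_eq in Ei; [|apply pow_lt; lra].
  replace (scal (INR (q2 - q1)) x i - IZR (p i))
    with (frac_vec (scal (INR q2) x) i - frac_vec (scal (INR q1) x) i); auto.
  unfold frac_vec, scal, frac_part, p. rewrite minus_IZR, minus_INR by auto. ring.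
Qed.

(* Both endpoint inequalities of [y]'s coordinate in the coarse cube [k] pass to the
   integer part [Int_part (2^G y_i)], since [2^J k_i] and [2^J (k_i + 1)] are integers. *)
Lemma dyadic_index_cube_incl d j0 J k y :
  in_cube d (Z.of_nat j0) k y ->
  forall z, in_cube d (Z.of_nat j0 + Z.of_nat J) (dyadic_index d (j0 + J) y) z ->
  in_cube d (Z.of_nat j0) k z.
Proof.
  intros Hy z Hz i Hi. specialize (Hy i Hi). specialize (Hz i Hi).
  rewrite <- Nat2Z.inj_add, nth_dyadic_index in Hz by auto.
  rewrite !powerRZ_2_opp_of_nat in *.
  set (kz := nth i k 0%Z) in *. set (c := Int_part (2 ^ (j0 + J) * y i)) in *.
  assert (H0 : 0 < 2 ^ j0) by (apply pow_lt; lra).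
  assert (HJ : 0 < 2 ^ J) by (apply pow_lt; lra).
  assert (HP : IZR (Z.of_nat (2 ^ J)) = 2 ^ J) by (rewrite <- INR_IZR_INZ; apply INR_pow2).
  assert (Hy' : IZR kz <= 2 ^ j0 * y i < IZR kz + 1).
  { destruct Hy as [Hy1 Hy2].
    apply (Rmult_le_compat_l (2 ^ j0)) in Hy1; [|lra].
    apply (Rmult_lt_compat_l (2 ^ j0)) in Hy2; [|lra].
    rewrite <- Rmult_assoc, Rinv_r, Rmult_1_l in Hy1, Hy2 by lra. lra. }
  assert (Hc1 : (Z.of_nat (2 ^ J) * kz <= c)%Z).
  { apply Int_part_ge. rewrite mult_IZR, HP, pow_add. nra. }
  assert (Hc2 : (c + 1 <= Z.of_nat (2 ^ J) * (kz + 1))%Z).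
  { enough (c < Z.of_nat (2 ^ J) * (kz + 1))%Z by lia.
    apply Int_part_lt. rewrite mult_IZR, plus_IZR, HP, pow_add. nra. }
  apply IZR_le in Hc1, Hc2. rewrite mult_IZR, HP in Hc1.
  rewrite plus_IZR, mult_IZR, plus_IZR, HP in Hc2.
  rewrite pow_add, Rinv_mult in Hz.
  assert (Hinv : / 2 ^ j0 = / 2 ^ j0 * / 2 ^ J * 2 ^ J) by (field; lra).
  assert (0 < / 2 ^ j0 * / 2 ^ J) by (apply Rmult_lt_0_compat; apply Rinv_0_lt_compat; lra).
  rewrite Hinv. split; nra.
Qed.

Lemma length_le_mul_fibers {A B} (eqB : forall x y : B, {x = y} + {x <> y}) (f : A -> B)
    (K : nat) (lM : list B) (T : list A) :
  NoDup T -> (forall t, In t T -> In (f t) lM) ->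
  (forall c (S : list A), NoDup S -> (forall t, In t S -> In t T /\ f t = c) ->
     (length S <= K)%nat) ->
  (length T <= K * length lM)%nat.
Proof.
  revert T. induction lM as [|c lM IH]; intros T HT Hin Hf.
  - destruct T as [|t T]; simpl; [lia|]. destruct (Hin t); left; auto.
  - set (is_c := fun t => if eqB (f t) c then true else false).
    set (T1 := filter is_c T). set (T2 := filter (fun t => negb (is_c t)) T).
    assert (Hlen : length T = (length T1 + length T2)%nat).
    { unfold T1, T2. clear. induction T as [|t T IH]; simpl; [auto|].
      destruct (is_c t); simpl; lia. }
    assert (length T1 <= K)%nat.
    { apply (Hf c); [apply NoDup_filter; auto|]. intros t Ht.
      apply filter_In in Ht. unfold is_c in Ht. destruct (eqB (f t) c); [tauto|].
      destruct Ht; discriminate. }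
    assert (length T2 <= K * length lM)%nat.
    { apply IH; [apply NoDup_filter; auto| |].
      - intros t Ht. apply filter_In in Ht. destruct Ht as [Ht1 Ht2]. unfold is_c in Ht2.
        destruct (Hin t Ht1) as [E|E]; [|auto]. destruct (eqB (f t) c); [discriminate|congruence].
      - intros c' S HS HS'. apply (Hf c' S HS). intros t Ht.
        destruct (HS' t Ht) as [Ht1 Ht2]. apply filter_In in Ht1. tauto. }
    simpl. lia.
Qed.

Lemma NoDup_length_le_of_injective {A} (h : A -> nat) (S : list A) (bound : nat) : NoDup S ->
  (forall s1 s2, In s1 S -> In s2 S -> h s1 = h s2 -> s1 = s2) ->
  (forall s, In s S -> (h s < bound)%nat) -> (length S <= bound)%nat.
Proof.
  intros HN Hi Hb. rewrite <- (length_map h S), <- (length_seq bound 0).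
  apply NoDup_incl_length; [apply NoDup_map_NoDup_ForallPairs; auto|].
  intros y Hy. apply in_map_iff in Hy. destruct Hy as [s [<- Hs]].
  apply in_seq. specialize (Hb s Hs). lia.
Qed.

Lemma dyadic_index_eq_gap d x G (m q1 q2 : nat) : (1 <= d)%nat ->
  INR m <= kappa_star d x ^ d * 2 ^ (d * G) -> (q1 < q2)%nat ->
  dyadic_index d G (frac_vec (scal (INR q1) x)) = dyadic_index d G (frac_vec (scal (INR q2) x)) ->
  (q1 + m < q2)%nat.
Proof.
  intros Hd Hm Hq E.
  apply distZ_lt_of_dyadic_index_eq in E; [|lia].
  apply kappa_star_pow_lt in E; [|auto|lia].
  assert (Hlt : INR m < INR (q2 - q1)) by lra.
  apply INR_lt in Hlt. lia.
Qed.

Section Grid.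
Variables (d j0 J : nat) (k : list Z) (xs : nat -> vec).
Hypothesis cube_in_unit_cube : forall y, in_cube d (Z.of_nat j0) k y -> in_unit_cube d y.

Lemma Mset_in_grid_points k' : Mset d xs (Z.of_nat j0) k J k' -> In k' (grid_points d (2 ^ (j0 + J))).
Proof.
  intros [Hl [Hsub _]]. apply in_grid_points; auto. intros i Hi.
  set (s := / 2 ^ (j0 + J)).
  assert (Hs : 0 < s) by (apply Rinv_0_lt_compat, pow_lt; lra).
  assert (Hz : in_unit_cube d (fun i => s * IZR (nth i k' 0%Z))).
  { apply cube_in_unit_cube, Hsub. intros i' Hi'.
    rewrite <- Nat2Z.inj_add, powerRZ_2_opp_of_nat. fold s. split; lra. }
  destruct (Hz i Hi) as [Hz1 Hz2]. split.
  - apply le_IZR. nra.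
  - apply lt_IZR. rewrite <- INR_IZR_INZ, INR_pow2.
    apply (Rmult_lt_reg_l s); auto. unfold s at 2. rewrite Rinv_l; [lra|].
    apply pow_nonzero. lra.
Qed.

Lemma card_Mset_le : (card (Mset d xs (Z.of_nat j0) k J) <= 2 ^ (d * (j0 + J)))%nat.
Proof.
  destruct (card_of_finite _ _ Mset_in_grid_points) as [lM [_ [_ [-> Hlen]]]].
  rewrite length_grid_points, <- Nat.pow_mul_r, Nat.mul_comm in Hlen. exact Hlen.
Qed.

Lemma dyadic_index_in_Mset n : (1 <= n)%nat -> (n <= 2 ^ (d * (j0 + J)))%nat ->
  in_cube d (Z.of_nat j0) k (xs n) ->
  Mset d xs (Z.of_nat j0) k J (dyadic_index d (j0 + J) (xs n)).
Proof.
  intros Hn1 Hn2 Hin. split; [apply length_dyadic_index|split].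
  - apply dyadic_index_cube_incl; auto.
  - exists n. rewrite <- !Nat2Z.inj_add. split; [lia|split].
    + rewrite <- Nat2Z.inj_mul, powerRZ_2_of_nat, <- INR_pow2. apply le_INR. lia.
    + apply in_cube_dyadic_index.
Qed.

End Grid.

Section Counting.
Variables (d : nat) (a : nat -> nat) (x : vec) (j0 J : nat) (k : list Z) (m : nat).
Hypothesis d_pos : (1 <= d)%nat.
Hypothesis a_increasing : forall n n', (1 <= n)%nat -> (n < n')%nat -> (a n < a n')%nat.
Hypothesis cube_in_unit_cube : forall y, in_cube d (Z.of_nat j0) k y -> in_unit_cube d y.
Hypothesis m_pos : (1 <= m)%nat.
Hypothesis m_le : INR m <= kappa_star d x ^ d * 2 ^ (d * (j0 + J)).

Let N := (2 ^ (d * (j0 + J)))%nat.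
Let xs := fun n => frac_vec (scal (INR (a n)) x).
Let visits := fun n : nat => (1 <= n <= N)%nat /\ in_cube d (Z.of_nat j0) k (xs n).

(* Two visits landing in the same dyadic cube of generation [j0 + J] have
   [a]-values more than [m] apart, so each cube receives at most [a N / m + 1] of them. *)
Lemma card_visits_le : (card visits <= (a N / m + 1) * card (Mset d xs (Z.of_nat j0) k J))%nat.
Proof.
  destruct (card_of_finite _ _ (Mset_in_grid_points d j0 J k xs cube_in_unit_cube))
    as [lM [_ [HlM [-> _]]]].
  destruct (card_of_finite visits (seq 1 N)) as [lT [HT [HlT [-> _]]]].
  { intros t [Ht _]. apply in_seq. lia. }
  apply (length_le_mul_fibers (list_eq_dec Z.eq_dec) (fun n => dyadic_index d (j0 + J) (xs n)));
    auto.
  { intros t Ht. apply HlM. apply HlT in Ht as [Ht Hin]. apply dyadic_index_in_Mset; [lia|unfold N in Ht; lia|exact Hin]. }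
  intros c S HS HS'.
  assert (Hvisit : forall s, In s S -> (1 <= s <= N)%nat).
  { intros s Hs. apply HS' in Hs as [Hs _]. apply HlT in Hs as [Hs _]. exact Hs. }
  apply (NoDup_length_le_of_injective (fun n => a n / m)%nat); auto.
  - intros s1 s2 Hs1 Hs2 E.
    assert (Hc : dyadic_index d (j0 + J) (xs s1) = dyadic_index d (j0 + J) (xs s2))
      by (apply HS' in Hs1, Hs2; destruct Hs1, Hs2; congruence).
    pose proof (Hvisit _ Hs1). pose proof (Hvisit _ Hs2).
    destruct (Nat.lt_trichotomy s1 s2) as [L|[L|L]]; auto; exfalso.
    + apply (dyadic_index_eq_gap d x (j0 + J) m (a s1) (a s2)) in Hc; auto; [|apply a_increasing; lia].
      assert (Hdiv : ((a s1 + 1 * m) / m <= a s2 / m)%nat) by (apply Nat.Div0.div_le_mono; lia).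
      rewrite Nat.div_add in Hdiv by lia. lia.
    + symmetry in Hc.
      apply (dyadic_index_eq_gap d x (j0 + J) m (a s2) (a s1)) in Hc; auto; [|apply a_increasing; lia].
      assert (Hdiv : ((a s2 + 1 * m) / m <= a s1 / m)%nat) by (apply Nat.Div0.div_le_mono; lia).
      rewrite Nat.div_add in Hdiv by lia. lia.
  - intros s Hs. pose proof (Hvisit s Hs).
    assert (a s <= a N)%nat.
    { destruct (Nat.eq_dec s N) as [->|]; [lia|]. apply Nat.lt_le_incl, a_increasing; lia. }
    assert (a s / m <= a N / m)%nat by (apply Nat.Div0.div_le_mono; auto). lia.
Qed.

End Counting.

Section Density.
Variable a : nat -> nat.
Hypothesis a_pos : forall n, (1 <= n)%nat -> (0 < a n)%nat.
Hypothesis a_increasing : forall n n', (1 <= n)%nat -> (n < n')%nat -> (a n < a n')%nat.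

Lemma le_increasing n : (n <= a n)%nat.
Proof.
  induction n as [|[|n] IH]; [lia|specialize (a_pos 1%nat); lia|].
  specialize (a_increasing (S n) (S (S n))). lia.
Qed.

Lemma counting_ratio_bounds N :
  0 <= INR (card (fun n : nat => (1 <= n)%nat /\ (a n <= N)%nat)) / INR N <= 1.
Proof.
  apply card_ratio_bounds, card_le_of_bounded. intros n [H1 H2].
  pose proof (le_increasing n). lia.
Qed.

Lemma lower_density_bounds : 0 <= lower_density a <= 1.
Proof.
  split.
  - apply Rge_le, (liminf_ge_of_eventually _ 0 1 counting_ratio_bounds).
    intros e He. exists 0%nat. intros n _. pose proof (counting_ratio_bounds n). lra.
  - apply (liminf_le_of_le _ 0 1 counting_ratio_bounds). apply counting_ratio_bounds.
Qed.

(* Fewer than [N] indices have [a_n < a_N], which, read through the lower density,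
   bounds [a_N] from above. *)
Lemma lower_density_term_bound eps : 0 < eps ->
  exists N0, forall N, (N0 <= N)%nat -> (lower_density a - eps) * (INR (a N) - 1) < INR N.
Proof.
  intros He.
  destruct (liminf_eventually_gt _ 0 1 counting_ratio_bounds eps He) as [M0 HM0].
  exists (M0 + 2)%nat. intros N HN.
  pose proof (le_increasing N).
  specialize (HM0 (a N - 1)%nat ltac:(lia)).
  assert (Hc : (card (fun n : nat => (1 <= n)%nat /\ (a n <= a N - 1)%nat) <= N - 1)%nat).
  { apply card_le_of_bounded. intros n [H1 H2]. split; [auto|].
    destruct (Nat.lt_ge_cases n N) as [|HnN]; [lia|]. exfalso.
    destruct (Nat.eq_dec n N) as [->|]; [lia|]. specialize (a_increasing N n). lia. }
  apply le_INR in Hc. rewrite !minus_INR in * by lia. simpl INR in *.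
  assert (Hpos : 0 < INR (a N) - 1).
  { assert (1 < INR (a N)) by (apply (lt_INR 1); lia). lra. }
  apply (Rmult_gt_compat_r (INR (a N) - 1)) in HM0; auto.
  unfold Rdiv in HM0. rewrite Rmult_assoc, Rinv_l in HM0 by lra.
  unfold lower_density. lra.
Qed.

End Density.

Lemma exists_nat_floor r : 0 <= r -> exists m : nat, INR m <= r < INR m + 1.
Proof.
  intros Hr. destruct (base_Int_part r) as [H1 H2].
  assert (Hz : (-1 < Int_part r)%Z) by (apply lt_IZR; lra).
  exists (Z.to_nat (Int_part r)). rewrite INR_IZR_INZ, Z2Nat.id by lia. lra.
Qed.

(* With [m = floor (X N)] and [a_N] at most about [N / delta], the fibre bound
   [a_N / m + 1] is at most about [1 / (X delta)]; the constant 2 absorbs the errors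
   once [X N >= 12]. *)
Lemma fiber_bound_le (X delta : R) (N aN m : nat) :
  0 < X <= 1 / 2 -> 0 < delta <= 1 -> 12 <= X * INR N -> X * INR N < INR m + 1 ->
  3 * delta / 4 * (INR aN - 1) < INR N -> (1 <= m)%nat ->
  INR (aN / m + 1) * (X * delta) <= 2.
Proof.
  intros HX Hd H12 Hm HaN Hm1.
  assert (HmP : 0 < INR m) by (apply lt_0_INR; lia).
  assert (HKm : INR (aN / m + 1) * INR m <= INR aN + INR m).
  { rewrite <- mult_INR, <- plus_INR. apply le_INR.
    pose proof (Nat.Div0.mul_div_le aN m). nia. }
  assert (HXd : 0 < X * delta <= 1 / 2) by (split; nra).
  assert (P1 : INR aN * (X * delta) * 3 / 4 < X * INR N + 3 * (X * delta) / 4).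
  { assert (3 * delta / 4 * (INR aN - 1) * X < INR N * X) by (apply Rmult_lt_compat_r; lra).
    nra. }
  assert (P2 : INR aN * (X * delta) <= 3 / 2 * INR m) by nra.
  apply (Rmult_le_reg_r (INR m)); auto. nra.
Qed.

Section Visits.
Variables (d : nat) (a : nat -> nat) (x : vec) (j0 : nat) (k : list Z).
Hypothesis d_pos : (1 <= d)%nat.
Hypothesis a_pos : forall n, (1 <= n)%nat -> (0 < a n)%nat.
Hypothesis a_increasing : forall n n', (1 <= n)%nat -> (n < n')%nat -> (a n < a n')%nat.
Hypothesis cube_in_unit_cube : forall y, in_cube d (Z.of_nat j0) k y -> in_unit_cube d y.

Let xs := fun n => frac_vec (scal (INR (a n)) x).
Let visits (N : nat) := card (fun n : nat => (1 <= n <= N)%nat /\ in_cube d (Z.of_nat j0) k (xs n)).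
Let cubes (J : nat) := card (Mset d xs (Z.of_nat j0) k J).

Lemma eventually_visits_le : exists J0, forall J, (J0 <= J)%nat ->
  INR (visits (2 ^ (d * (j0 + J)))) * (kappa_star d x ^ d * lower_density a)
  <= 2 * INR (cubes J).
Proof.
  pose proof (lower_density_bounds a a_pos a_increasing) as Hdelta.
  set (X := kappa_star d x ^ d) in *. set (delta := lower_density a) in *.
  assert (HX : 0 <= X <= 1 / 2)
    by (split; [apply pow_le, kappa_star_nonneg|apply kappa_star_pow_le_half; auto]).
  destruct (Req_dec (X * delta) 0) as [Hz|Hz].
  { exists 0%nat. intros J _. rewrite Hz, Rmult_0_r. pose proof (pos_INR (cubes J)). lra. }
  assert (HXp : 0 < X) by (destruct (proj1 HX) as [|<-]; [auto|rewrite Rmult_0_l in Hz; lra]).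
  assert (Hdp : 0 < delta) by (destruct (proj1 Hdelta) as [|<-]; [auto|rewrite Rmult_0_r in Hz; lra]).
  destruct (lower_density_term_bound a a_pos a_increasing (delta / 4)) as [N0 HN0]; [lra|].
  destruct (exists_nat_floor (12 / X)) as [T [_ HT]]; [apply Rlt_le, Rdiv_lt_0_compat; lra|].
  exists (N0 + T + 1)%nat. intros J HJ.
  set (N := (2 ^ (d * (j0 + J)))%nat).
  assert (HNJ : (J < N)%nat) by apply lt_pow2_mul, d_pos.
  assert (HXN : 12 <= X * INR N).
  { assert (HTN : INR T + 1 <= INR N) by (rewrite <- S_INR; apply le_INR; lia).
    apply (Rmult_le_reg_l (/ X)); [apply Rinv_0_lt_compat; lra|].
    rewrite <- Rmult_assoc, Rinv_l by lra. unfold Rdiv in HT. lra. }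
  destruct (exists_nat_floor (X * INR N)) as [m [Hm1 Hm2]]; [lra|].
  assert (Hm : (1 <= m)%nat) by (apply INR_le; simpl; lra).
  assert (Hm_le : INR m <= X * 2 ^ (d * (j0 + J))) by (rewrite <- INR_pow2; exact Hm1).
  assert (Hcount := card_visits_le d a x j0 J k m d_pos a_increasing cube_in_unit_cube Hm Hm_le).
  assert (Hfiber : INR (a N / m + 1) * (X * delta) <= 2).
  { specialize (HN0 N ltac:(lia)). fold delta in HN0.
    apply (fiber_bound_le X delta N (a N) m); auto; lra. }
  apply le_INR in Hcount. rewrite mult_INR in Hcount.
  change (INR (visits N) <= INR (a N / m + 1) * INR (cubes J)) in Hcount.
  pose proof (pos_INR (cubes J)).
  apply (Rle_trans _ (INR (a N / m + 1) * (X * delta) * INR (cubes J))); [nra|].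
  apply Rmult_le_compat_r; auto.
Qed.

Lemma visit_ratio_bounds N : 0 <= INR (visits N) / INR N <= 1.
Proof. apply card_ratio_bounds, card_le_of_bounded. intros n [Hn _]. exact Hn. Qed.

Lemma scaled_cubes_bounds J :
  0 <= powerRZ 2 (- (Z.of_nat d * Z.of_nat J)) * INR (cubes J) <= 2 ^ (d * j0).
Proof.
  rewrite <- Nat2Z.inj_mul, powerRZ_2_opp_of_nat.
  assert (HJ : 0 < 2 ^ (d * J)) by (apply pow_lt; lra).
  pose proof (pos_INR (cubes J)).
  assert (Hc : INR (cubes J) <= 2 ^ (d * j0) * 2 ^ (d * J)).
  { rewrite <- pow_add, <- Nat.mul_add_distr_l, <- INR_pow2.
    apply le_INR, card_Mset_le, cube_in_unit_cube. }
  split; [apply Rmult_le_pos; [apply Rlt_le, Rinv_0_lt_compat|]; lra|].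
  apply (Rmult_le_reg_l (2 ^ (d * J))); auto.
  rewrite <- Rmult_assoc, Rinv_r by lra. lra.
Qed.

Lemma eventually_visit_ratio_le : exists J0, forall J, (J0 <= J)%nat ->
  kappa_star d x ^ d * lower_density a / (2 ^ d * cube_measure d (Z.of_nat j0))
    * (INR (visits (2 ^ (d * (j0 + J)))) / INR (2 ^ (d * (j0 + J))))
  <= powerRZ 2 (- (Z.of_nat d * Z.of_nat J)) * INR (cubes J).
Proof.
  destruct eventually_visits_le as [J0 HJ0]. exists J0. intros J HJ. specialize (HJ0 J HJ).
  set (V := INR (visits _)) in *. set (C := INR (cubes J)) in *.
  set (P := kappa_star d x ^ d * lower_density a) in *.
  unfold cube_measure. rewrite <- !Nat2Z.inj_mul, !powerRZ_2_opp_of_nat, INR_pow2.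
  rewrite Nat.mul_add_distr_l, pow_add.
  assert (H0 : 0 < 2 ^ (d * j0)) by (apply pow_lt; lra).
  assert (HJ' : 0 < 2 ^ (d * J)) by (apply pow_lt; lra).
  assert (Hd2 : 2 <= 2 ^ d) by (replace d with (S (d - 1)) by lia; simpl;
    pose proof (pow_R1_Rle 2 (d - 1)); lra).
  assert (HC : 0 <= C) by apply pos_INR.
  replace (P / (2 ^ d * / 2 ^ (d * j0)) * (V / (2 ^ (d * j0) * 2 ^ (d * J))))
    with (V * P / 2 ^ d * / 2 ^ (d * J)) by (field; lra).
  rewrite (Rmult_comm (/ _)). apply Rmult_le_compat_r; [apply Rlt_le, Rinv_0_lt_compat; lra|].
  apply (Rmult_le_reg_l (2 ^ d)); [lra|]. unfold Rdiv.
  rewrite (Rmult_comm (V * P)), <- Rmult_assoc, Rinv_r by lra. nra.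
Qed.

End Visits.

Theorem proposition11p5 (d : nat) (a : nat -> nat) (x : vec) (j : Z) (k : list Z) :
  (1 <= d)%nat ->
  (forall n, (1 <= n)%nat -> (0 < a n)%nat) ->
  (forall n m, (1 <= n)%nat -> (n < m)%nat -> (a n < a m)%nat) ->
  length k = d ->
  (forall y, in_cube d j k y -> in_unit_cube d y) ->
  liminf (fun J : nat =>
            powerRZ 2 (- (Z.of_nat d * Z.of_nat J)) *
            INR (card (Mset d (fun n => frac_vec (scal (INR (a n)) x)) j k J)))
  >= (kappa_star d x ^ d * lower_density a) / (2 ^ d * cube_measure d j)
     * lower_freq d (fun n => scal (INR (a n)) x) j k.
Proof.
  intros Hd Ha0 Ha1 _ Hcube.
  destruct (Z_of_nat_complete j (in_unit_cube_generation_nonneg d j k Hd Hcube)) as [j0 ->].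
  apply (liminf_ge_mul_subseq _ _ (fun J => 2 ^ (d * (j0 + J)))%nat).
  - exists 0, (2 ^ (d * j0)). exact (scaled_cubes_bounds d a x j0 k Hcube).
  - exists 0, 1. exact (visit_ratio_bounds d a x j0 k).
  - intro J. apply Nat.lt_le_incl, lt_pow2_mul, Hd.
  - pose proof (lower_density_bounds a Ha0 Ha1).
    pose proof (kappa_star_nonneg d x).
    unfold cube_measure. rewrite powerRZ_neg'.
    apply Rmult_le_pos; [apply Rmult_le_pos; [apply pow_le|]; lra|].
    apply Rlt_le, Rinv_0_lt_compat, Rmult_lt_0_compat;
      [apply pow_lt; lra|apply Rinv_0_lt_compat, powerRZ_lt; lra].
  - exact (eventually_visit_ratio_le d a x j0 k Hd Ha0 Ha1 Hcube).
Qed.
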